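(* Let $p$ be a prime and let $(M\ N)$ be a coprime symmetric pair of $2\times 2$ integer matrices with $\operatorname{rank}_p M=1$, where $$M=\begin{pmatrix} m_1&m_2\\ p m_3&p m_4\end{pmatrix},\qquad N=\begin{pmatrix} n_1&n_2\\ n_3&n_4\end{pmatrix}$$ with $m_i,n_i\in\mathbb Z$. Then $p\mid m_1$ if and only if $p\mid n_4$, and $p\mid m_2$ if and only if $p\mid n_3$.
   Context: A pair $(M\ N)$ of $2\times 2$ matrices is called symmetric if $M\,{}^tN=N\,{}^tM$. It is a coprime pair if $M,N$ are integral and, for a $2\times 2$ rational matrix $G$, the pair $(GM\ GN)$ is integral only if $G$ is integral; equivalently, the $2\times 4$ matrix $(M\ N)$ has rank $2$ modulo every prime. $\operatorname{rank}_p M$ denotes the rank of $M$ modulo $p$. *)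

From HB Require Import structures.
From mathcomp Require Import all_boot all_order all_algebra.
Set Implicit Arguments. Unset Strict Implicit. Unset Printing Implicit Defensive.
Import Order.TTheory GRing.Theory Num.Theory.
Local Open Scope ring_scope.

Definition mx2 (a b c d : int) : 'M[int]_2 :=
  \matrix_(i < 2, j < 2)
    (if i == 0 then (if j == 0 then a else b) else (if j == 0 then c else d)).

Definition mx_modp (q : nat) (m n : nat) (A : 'M[int]_(m, n)) : 'M['F_q]_(m, n) :=
  map_mx (fun x : int => x%:~R) A.

Definition rank_mod (q : nat) (m n : nat) (A : 'M[int]_(m, n)) : nat :=
  \rank (mx_modp q A).

Definition symmetric_pair (M N : 'M[int]_2) : Prop := M *m N^T = N *m M^T.

Definition coprime_pair (M N : 'M[int]_2) : Prop :=
  forall q : nat, prime q -> rank_mod q (row_mx M N) = 2%N.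

From HB Require Import structures.
From mathcomp Require Import all_boot all_order all_algebra.
Set Implicit Arguments. Unset Strict Implicit. Unset Printing Implicit Defensive.
Import Order.TTheory GRing.Theory Num.Theory.
Local Open Scope ring_scope.

(* Modulo p the matrix M has rows (m1, m2) and 0, and N has second row
   (n3, n4).  The (1,2) entry of the symmetry condition then says that these
   two vectors are orthogonal in F_p^2.  Both are non-zero: the first because
   rank_p M = 1, the second because otherwise the second row of (M N) would
   vanish mod p, against coprimality.  Two non-zero orthogonal vectors (a, b)
   and (c, d) in the plane have a = 0 iff d = 0 and b = 0 iff c = 0. *)

Lemma Fp_intr_eq0 (p : nat) (x : int) : prime p ->
  ((x%:~R : 'F_p) == 0) = (p%:Z %| x)%Z.
Proof.
move=> p_pr; rewrite dvdzE (dvdn_pcharf (pchar_Fp p_pr)).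
by case: x => n //; rewrite NegzE mulrNz oppr_eq0.
Qed.

Lemma orthogonal_zero_pattern (R : idomainType) (a b c d : R) :
  (a != 0) || (b != 0) -> (c != 0) || (d != 0) -> a * c + b * d = 0 ->
  (a == 0) = (d == 0) /\ (b == 0) = (c == 0).
Proof.
have zero_transfer (x y u v : R) : (x != 0) || (y != 0) ->
    x * u + y * v = 0 -> x = 0 -> v = 0.
  by move=> + + x0; rewrite x0 eqxx mul0r add0r => /= y0 /eqP;
    rewrite mulf_eq0 (negbTE y0) => /eqP.
move=> ab cd orth; split; apply/eqP/eqP.
- exact: zero_transfer ab orth.
- by apply: (zero_transfer d c b a); rewrite 1?orbC // addrC mulrC (mulrC d).
- by apply: (zero_transfer b a d c); rewrite 1?orbC // addrC.
- by apply: (zero_transfer c d a b); rewrite // mulrC (mulrC d).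
Qed.

Lemma mxrank_row1_eq0 (F : fieldType) (n : nat) (A : 'M[F]_(2, n)) :
  row 1 A = 0 -> (\rank A <= 1)%N.
Proof.
move=> A1; apply: leq_trans (rank_leq_row (row 0 A)); apply/mxrankS/row_subP.
case=> -[|[|//]] lt_i.
- by rewrite (_ : Ordinal lt_i = 0) //; apply: val_inj.
- by rewrite (_ : Ordinal lt_i = 1) ?A1 ?sub0mx //; apply: val_inj.
Qed.

Section ReductionModP.

Variables (p : nat) (m1 m2 m3 m4 n1 n2 n3 n4 : int).
Hypothesis p_pr : prime p.

Let M := mx2 m1 m2 (p%:Z * m3) (p%:Z * m4).
Let N := mx2 n1 n2 n3 n4.

Let p_multiple_modp (x : int) : ((p%:Z * x)%:~R : 'F_p) = 0.
Proof. by apply/eqP; rewrite Fp_intr_eq0 // dvdz_mulr. Qed.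

Lemma symmetric_pair_orthogonal_modp : symmetric_pair M N ->
  (m1%:~R * n3%:~R + m2%:~R * n4%:~R : 'F_p) = 0.
Proof.
move=> /(congr1 (fun A : 'M[int]_2 => (A 0 1)%:~R : 'F_p)).
rewrite !mxE !big_ord_recl !big_ord0 !mxE /= !addr0 (mulrCA n1) (mulrCA n2).
by rewrite !intrD !p_multiple_modp addr0 !intrM.
Qed.

Lemma rank_modp_eq1_nonzero : rank_mod p M = 1%N ->
  (m1%:~R != 0 :> 'F_p) || (m2%:~R != 0 :> 'F_p).
Proof.
rewrite -negb_and /rank_mod => rkM; apply/negP => /andP[/eqP m1p /eqP m2p].
suff M0 : mx_modp p M = 0 by rewrite M0 mxrank0 in rkM.
apply/matrixP => i j; rewrite !mxE.
by case: i => [[|[|//]] ?]; case: j => [[|[|//]] ?] /=; rewrite ?p_multiple_modp.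
Qed.

Lemma coprime_pair_nonzero : coprime_pair M N ->
  (n3%:~R != 0 :> 'F_p) || (n4%:~R != 0 :> 'F_p).
Proof.
rewrite -negb_and => /(_ p p_pr); rewrite /rank_mod => rkMN.
apply/negP => /andP[/eqP n3p /eqP n4p].
suff : (\rank (mx_modp p (row_mx M N)) <= 1)%N by rewrite rkMN.
apply: mxrank_row1_eq0; apply/rowP => j; rewrite !mxE.
by case: splitP => -[[|[|//]] ?] _; rewrite !mxE /= ?p_multiple_modp.
Qed.

End ReductionModP.

Theorem lemma3p1 (p : nat) (m1 m2 m3 m4 n1 n2 n3 n4 : int) :
  prime p ->
  coprime_pair (mx2 m1 m2 (p%:Z * m3) (p%:Z * m4)) (mx2 n1 n2 n3 n4) ->
  symmetric_pair (mx2 m1 m2 (p%:Z * m3) (p%:Z * m4)) (mx2 n1 n2 n3 n4) ->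
  rank_mod p (mx2 m1 m2 (p%:Z * m3) (p%:Z * m4)) = 1%N ->
  ((p%:Z %| m1)%Z <-> (p%:Z %| n4)%Z) /\ ((p%:Z %| m2)%Z <-> (p%:Z %| n3)%Z).
Proof.
move=> p_pr cop sym rk; rewrite -!(Fp_intr_eq0 _ p_pr).
by have [-> ->] := orthogonal_zero_pattern (rank_modp_eq1_nonzero p_pr rk)
  (coprime_pair_nonzero p_pr cop) (symmetric_pair_orthogonal_modp p_pr sym).
Qed.
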